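(* There is an absolute constant $C$ such that the following holds. Let $G,H$ be finite graphs, $\phi$ a homomorphism from $G$ to $H$, $c=\chi(H)\ge2$, and $d=\max_{v\in V(G)}|\{\phi(w):(v,w)\in E(G)\}|\ge1$. Then $\chi(G)\le C\,d^2\log_2 c$ (the paper's explicit form is $\chi(G)\le 2d(d+1)\log c$).
   Context: A homomorphism from $G$ to $H$ is a map $\phi:V(G)\to V(H)$ such that $(u,v)\in E(G)$ implies $(\phi(u),\phi(v))\in E(H)$. $\chi$ denotes chromatic number. *)

From mathcomp Require Import all_boot.
From Stdlib Require Import Reals.
Set Implicit Arguments. Unset Strict Implicit. Unset Printing Implicit Defensive.

(* A finite simple graph is a symmetric irreflexive relation e on a finType V. *)

Definition colorable (V : finType) (e : rel V) (k : nat) : bool :=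
  [exists col : {ffun V -> 'I_k}, [forall u, forall v, e u v ==> (col u != col v)]].

Lemma colorable_card (V : finType) (e : rel V) :
  irreflexive e -> exists k, colorable e k.
Proof.
move=> irr; exists #|V|; apply/existsP; exists [ffun v => enum_rank v].
apply/forallP=> u; apply/forallP=> v; apply/implyP=> euv; rewrite !ffunE.
apply/negP=> /eqP /enum_rank_inj Euv; by rewrite Euv irr in euv.
Qed.

Definition chi (V : finType) (e : rel V) (irr : irreflexive e) : nat :=
  ex_minn (colorable_card irr).

Definition is_hom (V W : finType) (e : rel V) (f : rel W) (phi : V -> W) : Prop :=
  forall u v, e u v -> f (phi u) (phi v).

Definition hom_degree (V W : finType) (e : rel V) (phi : V -> W) : nat :=
  \max_(v : V) #|[set phi w | w in [pred w | e v w]]|.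

(* Composing phi with an
   optimal colouring of H gives a proper colouring psi of G by 'I_c in which
   every vertex sees at most d colours among its neighbours.  The "type" of v
   is psi v together with a list of d colours containing those neighbour
   colours; there are at most c^(d+1) types.  A map h : 'I_c -> 'I_(2d)
   "separates" a type if it keeps the own colour apart from every different
   neighbour colour.  A uniformly random h fails on a given type with
   probability at most 1/2, so some h separates half of any set of types,
   and greedily k = (log2 c + 1)(d + 1) maps separate all types.  Colouring v
   by (index of the first map separating its type, value of that map at
   psi v) is proper, whence chi(G) <= 2 d k <= 8 d^2 log2 c. *)

From mathcomp Require Import all_boot zify.
Set Implicit Arguments. Unset Strict Implicit. Unset Printing Implicit Defensive.

Lemma card_set_sum (U : finType) (P : pred U) : #|[set x | P x]| = \sum_(x : U) P x.
Proof. by rewrite -sum1_card big_mkcond; apply: eq_bigr => x _; rewrite inE; case: (P x). Qed.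

Lemma card_bigcup_le (I U : finType) (P : pred I) (F : I -> {set U}) :
  #|\bigcup_(i | P i) F i| <= \sum_(i | P i) #|F i|.
Proof.
elim/big_rec2: _ => [|i n X _ le_Xn]; first by rewrite cards0.
by rewrite (leq_trans (leq_card_setU _ X)) // leq_add2l.
Qed.

(* If every target is
   spoilt by at most half of the tests, then some test handles half of any
   set of targets (averaging), and iterating covers any set of fewer than
   2^k targets with k tests (greedy covering). *)
Section GreedyCover.
Variables (H T : finType) (bad : H -> T -> bool).

Lemma double_count (S : {set T}) :
  \sum_(h : H) #|[set t in S | bad h t]| = \sum_(t in S) #|[set h | bad h t]|.
Proof.
under eq_bigr => h _ do rewrite card_set_sum.
rewrite exchange_big /= [RHS]big_mkcond /=; apply: eq_bigr => t _.
rewrite card_set_sum; case: (boolP (t \in S)) => tS; last by rewrite big1.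
by apply: eq_bigr.
Qed.

Lemma halving_exists : 0 < #|H| ->
  (forall t, 2 * #|[set h | bad h t]| <= #|H|) ->
  forall S : {set T}, exists h, 2 * #|[set t in S | bad h t]| <= #|S|.
Proof.
move=> H_gt0 few_bad S.
have [/existsP // | /existsPn all_bad] :=
  boolP [exists h, 2 * #|[set t in S | bad h t]| <= #|S|].
have many : #|H| * #|S|.+1 <= 2 * \sum_(h : H) #|[set t in S | bad h t]|.
  rewrite big_distrr -sum_nat_const /=; apply: leq_sum => h _.
  by rewrite ltnNge all_bad.
have few : 2 * \sum_(h : H) #|[set t in S | bad h t]| <= #|S| * #|H|.
  rewrite double_count big_distrr -sum_nat_const /=; exact: leq_sum.
have := leq_trans many few; rewrite [X in _ <= X]mulnC leq_pmul2l //; lia.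
Qed.

(* Greedy covering: each chosen test halves the set of uncovered targets. *)
Lemma greedy_cover :
  (forall S : {set T}, exists h, 2 * #|[set t in S | bad h t]| <= #|S|) ->
  forall k (S : {set T}), #|S| < 2 ^ k ->
  exists fam : seq H, size fam <= k /\ forall t, t \in S -> has (fun h => ~~ bad h t) fam.
Proof.
move=> halving; elim=> [|k IHk] S small_S.
  exists [::]; split=> // t tS.
  by move: small_S; rewrite expn0 ltnS leqn0 cards_eq0 => /eqP S0; rewrite S0 inE in tS.
have [h half_bad] := halving S.
have [|fam [size_fam cover]] := IHk [set t in S | bad h t].
  by move: small_S; rewrite expnS; lia.
exists (h :: fam); split=> // t tS /=.
by case: (boolP (bad h t)) => //= bad_t; apply: cover; rewrite inE tS.
Qed.
End GreedyCover.

(* A type (a, s) : A * {ffun 'I_d -> A} stands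
   for a vertex of colour a whose neighbours have colours among s; a map
   h : A -> B separates it if h never identifies a with a different s j. *)
Section Separation.
Variables (A B : finType) (d : nat).

Definition separates (h : {ffun A -> B}) (t : A * {ffun 'I_d -> A}) : bool :=
  [forall j, (t.2 j != t.1) ==> (h (t.2 j) != h t.1)].

(* For x != y, the maps identifying x and y are a 1/#|B| fraction of all maps:
   redefining such a map at x injects them, times B, into all maps. *)
Lemma card_collide (x y : A) : x != y ->
  #|[set h : {ffun A -> B} | h x == h y]| * #|B| <= #|B| ^ #|A|.
Proof.
move=> neq_xy; set C := [set h : {ffun A -> B} | h x == h y].
pose upd (p : {ffun A -> B} * B) : {ffun A -> B} :=
  [ffun z => if z == x then p.2 else p.1 z].
have upd_inj : {in setX C [set: B] &, injective upd}.
  move=> [h1 b1] [h2 b2]; rewrite !inE /= => /andP [/eqP C1 _] /andP [/eqP C2 _] /ffunP E.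
  have eq_b : b1 = b2 by have := E x; rewrite !ffunE eqxx.
  rewrite eq_b; congr pair; apply/ffunP => z.
  case: (eqVneq z x) => [->|neq_zx].
    by rewrite C1 C2; have := E y; rewrite !ffunE eq_sym (negbTE neq_xy).
  by have := E z; rewrite !ffunE (negbTE neq_zx).
have := max_card (upd @: setX C [set: B]).
by rewrite (card_in_imset upd_inj) cardsX cardsT card_ffun.
Qed.

(* Union bound over the d neighbour slots. *)
Lemma card_nonseparating t :
  #|[set h | ~~ separates h t]| * #|B| <= d * #|B| ^ #|A|.
Proof.
have sub : [set h | ~~ separates h t] \subset
           \bigcup_(j | t.2 j != t.1) [set h : {ffun A -> B} | h (t.2 j) == h t.1].
  apply/subsetP => h; rewrite inE => /forallPn [j]; rewrite negb_imply negbK => /andP [neq eq_h].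
  by apply/bigcupP; exists j; rewrite ?inE.
apply: leq_trans (leq_mul (leq_trans (subset_leq_card sub) (card_bigcup_le _ _)) (leqnn _)) _.
rewrite big_distrl /=; apply: (@leq_trans (\sum_(j : 'I_d) #|B| ^ #|A|)).
  by rewrite big_mkcond; apply: leq_sum => j _; case: ifP => // /card_collide.
by rewrite sum_nat_const card_ord.
Qed.

(* If #|B| >= 2d, at most half of the maps fail on a given type, so by greedy
   covering k maps separate all the #|A|^(d+1) < 2^k types. *)
Lemma separating_family k : 0 < #|B| -> d.*2 <= #|B| -> #|A| ^ d.+1 < 2 ^ k ->
  exists fam : seq {ffun A -> B}, size fam <= k /\ forall t, has (fun h => separates h t) fam.
Proof.
move=> B_gt0 large_B few_types.
have few_bad t : 2 * #|[set h | ~~ separates h t]| <= #|{ffun A -> B}|.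
  rewrite card_ffun -(leq_pmul2r B_gt0); have := card_nonseparating t.
  rewrite -muln2 in large_B; nia.
have ffun_gt0 : 0 < #|{ffun A -> B}| by rewrite card_ffun expn_gt0 B_gt0.
have small_T : #|[set: A * {ffun 'I_d -> A}]| < 2 ^ k.
  by rewrite cardsT card_prod card_ffun card_ord -expnS.
have [fam [size_fam cover]] := greedy_cover (halving_exists ffun_gt0 few_bad) small_T.
exists fam; split=> // t; rewrite -(eq_has (fun h => negbK (separates h t))).
by apply: cover; rewrite inE.
Qed.
End Separation.

Section Colouring.
Variables (V : finType) (e : rel V).

Lemma colorable_of_proper (T : finType) (col : V -> T) :
  (forall u v, e u v -> col u != col v) -> colorable e #|T|.
Proof.
move=> proper; apply/existsP; exists [ffun v => enum_rank (col v)].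
apply/forallP=> u; apply/forallP=> v; apply/implyP=> euv; rewrite !ffunE.
by apply: contra (proper u v euv) => /eqP /enum_rank_inj ->.
Qed.

Lemma chi_le (irr : irreflexive e) k : colorable e k -> chi irr <= k.
Proof. by rewrite /chi; case: ex_minnP => n _ minimal /minimal. Qed.

Lemma chi_colorable (irr : irreflexive e) :
  exists col : V -> 'I_(chi irr), forall u v, e u v -> col u != col v.
Proof.
rewrite /chi; case: ex_minnP => n /existsP [col /forallP proper] _.
by exists col => u v euv; move/forallP/(_ v)/implyP: (proper u); apply.
Qed.

Variables (A B : finType) (d : nat) (psi : V -> A).
Hypothesis psi_proper : forall u v, e u v -> psi u != psi v.

Definition nbr_colours v : {set A} := [set psi w | w in [pred w | e v w]].

Hypothesis few_nbr_colours : forall v, #|nbr_colours v| <= d.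

Definition colour_type v : A * {ffun 'I_d -> A} :=
  (psi v, [ffun j : 'I_d => nth (psi v) (enum (nbr_colours v)) j]).

Lemma colour_type_nbr u v : e u v -> exists j, (colour_type u).2 j = psi v.
Proof.
move=> euv; have nbr_v : psi v \in enum (nbr_colours u).
  by rewrite mem_enum; apply/imsetP; exists v.
have lt_d : index (psi v) (enum (nbr_colours u)) < d.
  by rewrite (leq_trans _ (few_nbr_colours u)) // cardE index_mem.
by exists (Ordinal lt_d); rewrite ffunE nth_index.
Qed.

(* Recolour v by the index of the first map of fam separating its type and
   the value of this map at psi v: adjacent vertices with the same index get
   different values since that map separates the type of either one. *)
Lemma colorable_of_family (fam : seq {ffun A -> B}) :
  (forall t : A * {ffun 'I_d -> A}, has (fun h => separates h t) fam) ->
  colorable e (size fam * #|B|).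
Proof.
move=> sep_all.
pose idx v := find (fun h => separates h (colour_type v)) fam.
have idx_lt v : idx v < size fam by rewrite -has_find.
pose sep_fun v := tnth (in_tuple fam) (Ordinal (idx_lt v)).
have sep_funP v : separates (sep_fun v) (colour_type v).
  by rewrite /sep_fun (tnth_nth (sep_fun v)); exact: nth_find (sep_all (colour_type v)).
rewrite -[size fam]card_ord -card_prod.
apply: (colorable_of_proper (col := fun v => (Ordinal (idx_lt v), sep_fun v (psi v)))).
move=> u v euv; apply/eqP => -[eq_idx eq_val].
have [j type_j] := colour_type_nbr euv.
have := forallP (sep_funP u) j; rewrite type_j eq_sym psi_proper //=.
have same_fun : sep_fun u = sep_fun v by rewrite /sep_fun; congr tnth; exact: val_inj.
by rewrite eq_val same_fun eqxx.
Qed.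
End Colouring.

(* Through a homomorphism, neighbour colours are images of neighbour images. *)
Lemma hom_nbr_colours (V W : finType) (e : rel V) (phi : V -> W) c (col : W -> 'I_c) v :
  #|nbr_colours e (col \o phi) v| <= hom_degree e phi.
Proof.
rewrite /nbr_colours (imset_comp col phi).
apply: leq_trans (leq_imset_card _ _) _.
exact: (@leq_bigmax V (fun v => #|[set phi w | w in [pred w | e v w]]|) v).
Qed.

Lemma chi_hom_le (V W : finType) (e : rel V) (f : rel W)
    (eirr : irreflexive e) (firr : irreflexive f) (phi : V -> W) k :
  is_hom e f phi -> 0 < hom_degree e phi ->
  chi firr ^ (hom_degree e phi).+1 < 2 ^ k ->
  chi eirr <= k * (hom_degree e phi).*2.
Proof.
set c := chi firr; set d := hom_degree e phi => hom d_gt0 few_types.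
have [col col_proper] := chi_colorable firr.
have psi_proper u v : e u v -> (col \o phi) u != (col \o phi) v.
  by move=> euv; apply: col_proper; apply: hom.
have [|||fam [size_fam sep_all]] := @separating_family 'I_c 'I_(d.*2) d k;
  rewrite ?card_ord ?double_gt0 //.
have := colorable_of_family psi_proper (hom_nbr_colours e phi col) sep_all.
rewrite card_ord => /(chi_le eirr) /leq_trans; apply.
by rewrite leq_mul2r size_fam orbT.
Qed.

(* With l = floor(log2 c), k = (l+1)(d+1) is admissible in chi_hom_le. *)
Lemma trunc_log2_types c d : 0 < c -> c ^ d.+1 < 2 ^ ((trunc_log 2 c).+1 * d.+1).
Proof. by move=> c_gt0; rewrite expnM ltn_exp2r // trunc_log_ltn. Qed.

Lemma colour_count_le l d : 0 < l -> 0 < d -> l.+1 * d.+1 * d.*2 <= 8 * (d * d * l).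
Proof. rewrite -muln2; nia. Qed.

(* Real numbers are loaded only now, since Reals rebinds the notation ^ on nat. *)
From Stdlib Require Import Reals Lra.

Lemma INR_expn a n : INR (expn a n) = (INR a ^ n)%R.
Proof. by elim: n => [|n IHn] //; rewrite expnS -multE mult_INR IHn. Qed.

Lemma trunc_log2_le_log2 c : 0 < c -> (INR (trunc_log 2 c) <= ln (INR c) / ln 2)%R.
Proof.
move=> c_gt0; set l := trunc_log 2 c.
have ln2_gt0 : (0 < ln 2)%R by have := ln_lt_2; lra.
have pow_le : (2 ^ l <= INR c)%R.
  by have := le_INR _ _ (leP (trunc_logP (isT : 1 < 2) c_gt0)); rewrite INR_expn.
have ln_pow_le : (INR l * ln 2 <= ln (INR c))%R.
  rewrite -ln_pow; last lra.
  case: (Rle_lt_or_eq_dec _ _ pow_le) => [lt | ->]; last lra.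
  by apply: Rlt_le; apply: ln_increasing => //; apply: pow_lt; lra.
apply: (Rmult_le_reg_r (ln 2)) => //.
by rewrite /Rdiv Rmult_assoc Rinv_l; lra.
Qed.

Theorem mainTheorem8 :
  exists C : R,
  forall (V W : finType) (e : rel V) (f : rel W)
    (esym : symmetric e) (eirr : irreflexive e)
    (fsym : symmetric f) (firr : irreflexive f)
    (phi : V -> W),
    is_hom e f phi ->
    (2 <= chi firr)%N ->
    (1 <= hom_degree e phi)%N ->
    (INR (chi eirr) <= C * INR (hom_degree e phi) ^ 2
                         * (ln (INR (chi firr)) / ln 2))%R.
Proof.
exists 8%R => V W e f _ eirr _ firr phi hom c_ge2 d_gt0.
set c := chi firr in c_ge2 *; set d := hom_degree e phi in d_gt0 *.
have c_gt0 : 0 < c by apply: leq_trans c_ge2.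
set l := trunc_log 2 c.
have l_gt0 : 0 < l by rewrite trunc_log_gt0.
have chi_le_nat : chi eirr <= 8 * (d * d * l).
  apply: leq_trans (chi_hom_le eirr hom d_gt0 (trunc_log2_types d c_gt0)) _.
  exact: colour_count_le l_gt0 d_gt0.
apply: Rle_trans (le_INR _ _ (leP chi_le_nat)) _.
rewrite -!multE !mult_INR (_ : INR 8 = 8%R); last by simpl; lra.
rewrite (_ : (8 * (INR d * INR d * INR l) = 8 * INR d ^ 2 * INR l)%R); last ring.
apply: Rmult_le_compat_l; last exact: trunc_log2_le_log2.
by apply: Rmult_le_pos; [lra | apply: pow_le; apply: pos_INR].
Qed.
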